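(* Let $n \ge 3$ be odd and let $T$ be the $n$-vertex tree obtained from the star $K_{1,(n-1)/2}$ by subdividing each edge exactly once (by one new vertex). Then $$\chi_{2K_2}(T) = \left\lceil \sqrt{n - \tfrac34} + \tfrac12 \right\rceil.$$
   Context: All graphs are finite and simple. For a fixed bipartite graph $H$, a proper vertex coloring of a graph $G$ is called an $H$-avoiding coloring if for any two color classes, the subgraph of $G$ induced by their union contains no induced subgraph isomorphic to $H$. $\chi_H(G)$ denotes the minimum number of colors in an $H$-avoiding coloring of $G$. $2K_2$ is the disjoint union of two edges; $K_{1,m}$ is the star with $m$ leaves. *)

From Stdlib Require Import Reals.
From HB Require Import structures.
From mathcomp Require Import all_boot all_order all_algebra.
From mathcomp Require Import Rstruct.
Set Implicit Arguments. Unset Strict Implicit. Unset Printing Implicit Defensive.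
Import Order.TTheory GRing.Theory Num.Theory.

Definition simple_graph (V : finType) (e : rel V) : Prop :=
  symmetric e /\ irreflexive e.

Definition proper_coloring (V : finType) (e : rel V) (k : nat) (c : V -> 'I_k) : Prop :=
  forall x y, e x y -> c x != c y.

Definition has_induced_copy (V U : finType) (e : rel V) (eH : rel U) (S : pred V) : Prop :=
  exists f : U -> V, [/\ injective f, (forall u, S (f u)) &
                         (forall u w, e (f u) (f w) = eH u w)].

Definition H_avoiding (V U : finType) (e : rel V) (eH : rel U) (k : nat) (c : V -> 'I_k) : Prop :=
  proper_coloring e c /\
  forall i j : 'I_k, i != j ->
    ~ has_induced_copy e eH (fun v => (c v == i) || (c v == j)).

Definition H_colorable (V U : finType) (e : rel V) (eH : rel U) (k : nat) : Prop :=
  exists c : V -> 'I_k, H_avoiding e eH c.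

Definition is_chi_H (V U : finType) (e : rel V) (eH : rel U) (k : nat) : Prop :=
  H_colorable e eH k /\ forall k', H_colorable e eH k' -> k <= k'.

Definition twoK2 : rel 'I_4 := fun x y =>
  [|| (val x == 0) && (val y == 1), (val x == 1) && (val y == 0),
      (val x == 2) && (val y == 3) | (val x == 3) && (val y == 2)].

(* For odd n = 2m+1: star K_{1,m} with every edge subdivided once.
   Vertex 0 is the centre, vertices 1..m are the subdivision vertices,
   vertex i+m is the leaf attached to i (1 <= i <= m). *)
Definition subdivided_star (n : nat) : rel 'I_n := fun x y =>
  let m := n./2 in
  [|| (val x == 0) && (1 <= val y <= m), (val y == 0) && (1 <= val x <= m),
      (1 <= val x <= m) && (val y == val x + m)
    | (1 <= val y <= m) && (val x == val y + m)].
Arguments subdivided_star n : clear implicits.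

From Stdlib Require Import Reals.
From HB Require Import structures.
From mathcomp Require Import all_boot all_order all_algebra.
From mathcomp Require Import reals Rstruct.
From mathcomp Require Import zify ring lra.
Import Order.TTheory GRing.Theory Num.Theory.
Set Implicit Arguments. Unset Strict Implicit. Unset Printing Implicit Defensive.

(* Write n = 2m + 1, so the subdivided star T has a centre 0, middle vertices
   1..m and leaves m+1..2m, the branch of index i being the path 0 - i - i+m.
   The proof has three parts.
   1. Any simple graph: an induced 2K_2 is a pair of edges with no edge and no
      vertex in common, so a 2K_2-avoiding colouring must give the t edges of
      an induced matching t distinct pairs of colours; hence t <= C(k,2).
   2. In T every induced 2K_2 consists of two pendant edges {i, i+m} of
      distinct branches. The m pendant edges form an induced matching, so
      chi_{2K_2}(T) needs m <= C(k,2); conversely if m <= C(k,2), colour the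
      centre 0 and the branches with distinct pairs a < b (b on the middle
      vertex, a on the leaf): two colour classes then contain at most one
      branch. So chi_{2K_2}(T) is the least k with m <= C(k,2).
   3. Arithmetic: k >= sqrt(n - 3/4) + 1/2 iff (k - 1/2)^2 >= 2m + 1/4 iff
      m <= C(k,2), so that least k is the stated ceiling. *)

Section Induced2K2.
Variables (V : finType) (e : rel V).

Definition induced_2K2 (a b c d : V) : bool :=
  [&& e a b, e c d, ~~ e a c, ~~ e a d, ~~ e b c, ~~ e b d &
      [&& a != c, a != d, b != c & b != d]].

Hypothesis simple_e : simple_graph e.

Lemma has_induced_2K2P (S : pred V) :
  has_induced_copy e twoK2 S <->
  exists a b c d, induced_2K2 a b c d /\ [/\ S a, S b, S c & S d].
Proof.
have [e_sym e_irr] := simple_e.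
split.
  case=> f [f_inj f_S f_e].
  have ne u w : u != w -> f u != f w by apply: contra => /eqP /f_inj ->.
  exists (f (@Ordinal 4 0 isT)), (f (@Ordinal 4 1 isT)), (f (@Ordinal 4 2 isT)),
    (f (@Ordinal 4 3 isT)); split; last by split.
  by rewrite /induced_2K2 !f_e !ne.
case=> a [b [c [d [/and5P[eab ecd nac nad /and3P[nbc nbd /and4P[ac ad bc bd]]]]]]].
case=> Sa Sb Sc Sd.
have ab : a != b by apply: contraTneq eab => ->; rewrite e_irr.
have cd : c != d by apply: contraTneq ecd => ->; rewrite e_irr.
have abcd_uniq : uniq [:: a; b; c; d] by rewrite /= !inE !negb_or ab ac ad bc bd cd.
pose f (u : 'I_4) := nth a [:: a; b; c; d] u.
exists f; split.
- move=> u w /eqP; rewrite (@nth_uniq _ a [:: a; b; c; d] u w (ltn_ord u) (ltn_ord w) abcd_uniq).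
  by move/eqP/val_inj.
- by case=> [[|[|[|[|?]]]] ?].
- move=> [[|[|[|[|?]]]] ?] [[|[|[|[|?]]]] ?] //; rewrite /f /twoK2 /=.
  all: rewrite ?e_irr ?eab ?ecd ?(e_sym b a) ?eab ?(e_sym d c) ?ecd //.
  all: rewrite ?(negPf nac) ?(negPf nad) ?(negPf nbc) ?(negPf nbd) //.
  all: by rewrite e_sym ?(negPf nac) ?(negPf nad) ?(negPf nbc) ?(negPf nbd).
Qed.

(* The edges u_i v_i (i < t) of an induced matching receive, in a 2K_2-avoiding
   colouring, t distinct 2-sets of colours: t <= C(k,2). *)
Lemma induced_matching_bound (t k : nat) (u v : 'I_t -> V) (c : V -> 'I_k) :
  (forall i, e (u i) (v i)) ->
  (forall i j, i != j -> induced_2K2 (u i) (v i) (u j) (v j)) ->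
  H_avoiding e twoK2 c -> t <= 'C(k, 2).
Proof.
move=> e_uv matching [proper_c avoid_c].
pose pair_of i := [set c (u i); c (v i)].
have distinct_colors i : c (u i) != c (v i) by apply: proper_c.
have pair_inj : injective pair_of.
  move=> i j eq_ij; apply/eqP; apply/negPn/negP => ne_ij.
  apply: (avoid_c _ _ (distinct_colors i)); apply/has_induced_2K2P.
  exists (u i), (v i), (u j), (v j); split; first exact: matching.
  have: c (u j) \in pair_of i by rewrite eq_ij !inE eqxx.
  have: c (v j) \in pair_of i by rewrite eq_ij !inE eqxx orbT.
  by rewrite !inE !eqxx orbT => -> ->.
have: pair_of @: setT \subset [set A : {set 'I_k} | #|A| == 2].
  by apply/subsetP => A /imsetP[i _ ->]; rewrite inE cards2 distinct_colors.
by move/subset_leq_card; rewrite card_imset // card_draws !card_ord cardsT card_ord.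
Qed.

End Induced2K2.

Definition star_edge (m x y : nat) : bool :=
  [|| (x == 0) && (1 <= y <= m), (y == 0) && (1 <= x <= m),
      (1 <= x <= m) && (y == x + m) | (1 <= y <= m) && (x == y + m)].

Definition pendant (m i x y : nat) : bool :=
  ((x == i) && (y == i + m)) || ((x == i + m) && (y == i)).

Lemma subdivided_starE m (x y : 'I_(m + m).+1) :
  subdivided_star _ x y = star_edge m x y.
Proof. by rewrite /subdivided_star /star_edge (_ : (m + m).+1./2 = m) //; lia. Qed.

Lemma subdivided_star_simple m : simple_graph (subdivided_star (m + m).+1).
Proof. by split=> [x y|x]; rewrite !subdivided_starE /star_edge; lia. Qed.

(* An edge through the centre is adjacent to every other edge, so an induced
   2K_2 of the star consists of two pendant edges, of distinct branches. *)
Lemma star_2K2_pendant m x y z w :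
  star_edge m x y -> star_edge m z w ->
  ~~ star_edge m x z -> ~~ star_edge m x w ->
  ~~ star_edge m y z -> ~~ star_edge m y w ->
  [&& x != z, x != w, y != z & y != w] ->
  exists i j, [/\ 1 <= i <= m, 1 <= j <= m, i != j, pendant m i x y & pendant m j z w].
Proof.
rewrite /pendant {1 2}/star_edge.
case/or4P => [/andP[/eqP ? ?] | /andP[/eqP ? ?] | /andP[? /eqP ?] | /andP[? /eqP ?]];
case/or4P => [/andP[/eqP ? ?] | /andP[/eqP ? ?] | /andP[? /eqP ?] | /andP[? /eqP ?]];
subst => n1 n2 n3 n4 /and4P[d1 d2 d3 d4].
all: first [ by case/negP: n1; rewrite /star_edge; lia
           | by case/negP: n2; rewrite /star_edge; lia
           | by case/negP: n3; rewrite /star_edge; lia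
           | by case/negP: n4; rewrite /star_edge; lia | idtac ].
all: by first [exists x | exists y]; first [exists z | exists w]; split; lia.
Qed.

Fixpoint pairs k : seq (nat * nat) :=
  if k is k'.+1 then pairs k' ++ [seq (x, k') | x <- iota 0 k'] else [::].

Lemma size_pairs k : size (pairs k) = 'C(k, 2).
Proof. by elim: k => [|k IH] //=; rewrite size_cat IH size_map size_iota binS bin1. Qed.

Lemma mem_pairs k p : p \in pairs k -> p.1 < p.2 < k.
Proof.
case: p => p1 p2 /=; elim: k => [|k IH] //=.
by rewrite mem_cat => /orP[/IH|/mapP[x]]; [lia | rewrite mem_iota => ? [-> ->]; lia].
Qed.

Lemma uniq_pairs k : uniq (pairs k).
Proof.
elim: k => [|k IH] //=; rewrite cat_uniq IH map_inj_uniq ?iota_uniq; last by move=> x y [].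
by rewrite andbT; apply/hasPn => p /mapP[x _ ->]; apply/negP => /mem_pairs /=; lia.
Qed.

Lemma nth_pairs k m v : m <= 'C(k, 2) -> 1 <= v <= m ->
  (nth (0, 0) (pairs k) v.-1).1 < (nth (0, 0) (pairs k) v.-1).2 < k.
Proof. by move=> hm hv; apply/mem_pairs/mem_nth; rewrite size_pairs; lia. Qed.

Lemma ordered_pair_eq (p q : nat * nat) (i j : nat) :
  p.1 < p.2 -> q.1 < q.2 ->
  all (fun x => (x == i) || (x == j)) [:: p.1; p.2; q.1; q.2] -> p = q.
Proof.
case: p q => [p1 p2] [q1 q2] /=; rewrite andbT => ? ? /and4P[? ? ? ?].
by apply/eqP; rewrite xpair_eqE; lia.
Qed.

Definition star_color (m : nat) (P : seq (nat * nat)) (v : nat) : nat :=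
  if v == 0 then 0
  else if v <= m then (nth (0, 0) P v.-1).2 else (nth (0, 0) P (v - m).-1).1.

Lemma star_color0 m P : star_color m P 0 = 0.
Proof. by []. Qed.

Lemma star_color_middle m P v : 1 <= v <= m -> star_color m P v = (nth (0, 0) P v.-1).2.
Proof. by move=> hv; rewrite /star_color ifF ?ifT //; lia. Qed.

Lemma star_color_leaf m P v :
  1 <= v <= m -> star_color m P (v + m) = (nth (0, 0) P v.-1).1.
Proof. by move=> hv; rewrite /star_color ifF ?ifF ?addnK //; lia. Qed.

Lemma star_color_pendant m P (Q : pred nat) r x y : 1 <= r <= m -> pendant m r x y ->
  Q (star_color m P x) -> Q (star_color m P y) ->
  Q (nth (0, 0) P r.-1).1 && Q (nth (0, 0) P r.-1).2.
Proof.
move=> hr; rewrite -(star_color_middle _ hr) -(star_color_leaf _ hr).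
by case/orP => /andP[/eqP-> /eqP->] -> ->.
Qed.

Section PairColoring.
Variables (m k : nat).
Hypothesis m_le : m <= 'C(k, 2).
Local Notation col := (star_color m (pairs k)).

Lemma star_color_lt v : 0 < k -> v <= m + m -> col v < k.
Proof.
rewrite /star_color; case: ifP => // v0; case: ifP => vm ? ?.
  by have := @nth_pairs k m v; lia.
by have := @nth_pairs k m (v - m); lia.
Qed.

(* Centre 0 < b and leaf a < b: the pair colouring is proper. *)
Lemma star_color_proper x y : star_edge m x y -> col x != col y.
Proof.
rewrite /star_edge.
case/or4P => [/andP[/eqP-> h] | /andP[/eqP-> h] | /andP[h /eqP->] | /andP[h /eqP->]];
rewrite ?star_color0 (star_color_middle _ h) ?(star_color_leaf _ h);
by have := nth_pairs m_le h; lia.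
Qed.

Lemma star_color_branches_2K2_free (i j p q : nat) x y z w :
  1 <= p <= m -> 1 <= q <= m -> pendant m p x y -> pendant m q z w ->
  all (fun v => (col v == i) || (col v == j)) [:: x; y; z; w] -> p = q.
Proof.
move=> hp hq pxy pzw /and5P[cx cy cz cw _].
pose in_ij a := (a == i) || (a == j).
have /andP[p1 p2] := star_color_pendant (Q := in_ij) hp pxy cx cy.
have /andP[q1 q2] := star_color_pendant (Q := in_ij) hq pzw cz cw.
have /andP[lt_p _] := nth_pairs m_le hp.
have /andP[lt_q _] := nth_pairs m_le hq.
rewrite /in_ij in p1 p2 q1 q2.
have /eqP := ordered_pair_eq lt_p lt_q (i := i) (j := j) ltac:(by rewrite /= p1 p2 q1 q2).
rewrite nth_uniq ?size_pairs ?uniq_pairs //.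
all: by clear -hp hq m_le; lia.
Qed.

End PairColoring.

Section SubdividedStar.
Variable m : nat.
Local Notation star := (subdivided_star (m + m).+1).

Definition middle (i : 'I_m) : 'I_(m + m).+1 := inord i.+1.
Definition leaf (i : 'I_m) : 'I_(m + m).+1 := inord (i.+1 + m).

Lemma val_middle i : middle i = i.+1 :> nat.
Proof. by apply: inordK; have := ltn_ord i; lia. Qed.

Lemma val_leaf i : leaf i = i.+1 + m :> nat.
Proof. by apply: inordK; have := ltn_ord i; lia. Qed.

Lemma star_2K2P (a b c d : 'I_(m + m).+1) :
  reflect (exists i j, [/\ 1 <= i <= m, 1 <= j <= m, i != j,
                           pendant m i a b & pendant m j c d])
          (induced_2K2 star a b c d).
Proof.
case: a b c d => [a ?] [b ?] [c ?] [d ?].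
rewrite /induced_2K2 !subdivided_starE -!val_eqE /=.
apply: (iffP idP) => [/and5P[exy ezw n1 n2 /and3P[n3 n4 dist]] | [i [j [hi hj ij pi pj]]]].
  exact: star_2K2_pendant.
move: pi pj; rewrite /pendant.
case/orP => /andP[/eqP-> /eqP->]; case/orP => /andP[/eqP-> /eqP->].
all: by rewrite /star_edge; apply/and5P; split; [lia | lia | lia | lia | apply/and3P; split; lia].
Qed.

(* The m pendant edges form an induced matching. *)
Lemma star_colors_lower k : H_colorable star twoK2 k -> m <= 'C(k, 2).
Proof.
case=> c avoid_c.
apply: (induced_matching_bound (u := middle) (v := leaf) (subdivided_star_simple m) _ _ avoid_c).
  by move=> i; rewrite subdivided_starE val_middle val_leaf /star_edge; have := ltn_ord i; lia.
move=> i j ne_ij; apply/star_2K2P; exists i.+1, j.+1.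
have {}ne_ij : i != j :> nat by [].
rewrite /pendant !val_middle !val_leaf.
by have := ltn_ord i; have := ltn_ord j; split; lia.
Qed.

(* The pair colouring is proper and 2K_2-avoiding. *)
Lemma star_colors_upper k : 0 < m -> m <= 'C(k, 2) -> H_colorable star twoK2 k.
Proof.
case: k => [|k] m_gt0 m_le; first by move: m_le; rewrite bin0n; lia.
pose c (v : 'I_(m + m).+1) : 'I_k.+1 := inord (star_color m (pairs k.+1) v).
have val_c v : val (c v) = star_color m (pairs k.+1) v.
  by apply/inordK/star_color_lt; have := ltn_ord v; lia.
exists c; split.
  by move=> x y; rewrite subdivided_starE -val_eqE !val_c; apply: star_color_proper.
move=> i j ne_ij /(has_induced_2K2P (subdivided_star_simple m)).
case=> a [b [c' [d [/star_2K2P[p [q [hp hq ne_pq pab pcd]]] [Sa Sb Sc Sd]]]]].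
have col_in v : (c v == i) || (c v == j) ->
    (star_color m (pairs k.+1) v == i) || (star_color m (pairs k.+1) v == j).
  by rewrite -val_c.
have := star_color_branches_2K2_free m_le hp hq pab pcd (i := i) (j := j).
rewrite /= (col_in _ Sa) (col_in _ Sb) (col_in _ Sc) (col_in _ Sd) => /(_ isT) /eqP.
by rewrite (negPf ne_pq).
Qed.

Lemma star_colorable_iff k : 0 < m -> H_colorable star twoK2 k <-> m <= 'C(k, 2).
Proof.
by move=> m_gt0; split; [exact: star_colors_lower | exact: star_colors_upper].
Qed.

(* Since C(., 2) is monotone, chi_{2K_2} of the star is the least k with
   m <= C(k, 2). *)
Lemma star_chi k : 0 < m ->
  is_chi_H star twoK2 k <-> m <= 'C(k, 2) /\ 'C(k.-1, 2) < m.
Proof.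
move=> m_gt0; rewrite /is_chi_H star_colorable_iff //; split.
  case=> le_k min_k; split => //; case: k le_k min_k => [|k] le_k min_k.
    by rewrite bin0n.
  by rewrite ltnNge; apply/negP => /(star_colorable_iff k m_gt0).2 /min_k; lia.
case=> le_k lt_k; split => // k' /(star_colorable_iff k' m_gt0) le_k'.
rewrite leqNgt; apply/negP => lt_k'k.
by have := @leq_bin2l k' k.-1 2 ltac:(lia); lia.
Qed.

End SubdividedStar.

Lemma bin2_twice r : 'C(r, 2) * 2 = r * r.-1.
Proof. by elim: r => [|r IH] //; rewrite binS bin1 mulnDl IH; case: r {IH} => //= r; lia. Qed.

Local Open Scope ring_scope.

(* sqrt(2m + 1/4) + 1/2 <= r iff (r - 1/2)^2 >= 2m + 1/4 iff m <= C(r, 2). *)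
Lemma sqrt_threshold (F : rcfType) (m r : nat) : (0 < m)%N ->
  (Num.sqrt ((m + m).+1%:R - 3 / 4) + 1 / 2 <= r%:R :> F) = (m <= 'C(r, 2))%N.
Proof.
move=> m_gt0.
have -> : (m + m).+1%:R - 3 / 4 = (m * 2)%:R + 1 / 4 :> F.
  by rewrite -addn1 !natrD natrM; field.
case: r => [|r].
  rewrite bin0n leqn0 (_ : (m == 0)%N = false); last by lia.
  apply/negbTE; rewrite -ltNge.
  by have := sqrtr_ge0 ((m * 2)%:R + 1 / 4 : F); lra.
have -> : r.+1%:R = r%:R + 1 / 2 + 1 / 2 :> F by rewrite -natr1; field.
have a_ge0 : 0 <= (m * 2)%:R + 1 / 4 :> F by have := ler0n F (m * 2); lra.
have K_ge0 : 0 <= r%:R + 1 / 2 :> F by have := ler0n F r; lra.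
rewrite lerD2r -ler_sqr ?nnegrE ?sqrtr_ge0 // sqr_sqrtr //.
rewrite (_ : (r%:R + 1 / 2) ^+ 2 = (r.+1 * r)%:R + 1 / 4 :> F); last first.
  by rewrite natrM -natr1; field.
by rewrite lerD2r ler_nat -(bin2_twice r.+1) leq_pmul2r.
Qed.

Lemma ceil_threshold (F : realType) (m k : nat) : (0 < m)%N ->
  Posz k = Num.ceil (Num.sqrt ((m + m).+1%:R - 3 / 4) + 1 / 2 : F) <->
  (m <= 'C(k, 2))%N /\ ('C(k.-1, 2) < m)%N.
Proof.
move=> m_gt0; rewrite (rwP eqP) eq_sym ceil_eq.
have natzR (r : nat) : r%:~R = r%:R :> F by [].
rewrite natzR sqrt_threshold //.
case: k => [|k].
  by split=> [/andP[_]|[]]; rewrite bin0n /=; lia.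
have -> : (Posz k.+1 - 1)%:~R = k%:R :> F by rewrite -natzR; congr intmul; lia.
rewrite ltNge sqrt_threshold // -ltnNge andbC.
exact: (iff_sym (rwP andP)).
Qed.

Theorem corollary4 (n : nat) (hn : (3 <= n)%N) (hodd : odd n) (k : nat) :
  is_chi_H (subdivided_star n) twoK2 k <->
  Posz k = Num.ceil (Num.sqrt ((n%:R : R) - 3 / 4) + 1/2).
Proof.
have [m n_eq] : exists m, n = (m + m).+1%N by exists n./2; lia.
have m_gt0 : (0 < m)%N by lia.
subst n.
by rewrite star_chi // ceil_threshold.
Qed.
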